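(* Let $\sigma \in (\mathbb{R}[\mathbf{x}]_{2d+2})^{*}$ be a positive linear functional, and let $\mathbf{k}, \mathbf{p}$ (together with $\mathbf{l}$, $\mathbf{b}$) be the output of the orthogonalization algorithm described below. For $\mathbf{x}^{\alpha}\in (\mathbf{l})_{d}$, i.e. $\mathbf{x}^{\alpha}$ divisible by a monomial in $\mathbf{l}$ and of degree $|\alpha|\le d$, the polynomial $p_{\alpha}= \mathrm{proj}(\mathbf{x}^{\alpha}, \mathbf{p}_{\preceq \alpha})$ lies in $(\mathbf{k})_{\preceq \alpha} \subset \mathrm{Ann}_{d}(\sigma)$.
   Context: Let $\sigma \in (\mathbb{R}[\mathbf{x}]_{2d+2})^{*}$ be positive, i.e. $\sigma(p^2)\ge 0$ for all polynomials $p$ of degree $\le d+1$. Define the bilinear form $\langle p, q\rangle_{\sigma} := \sigma(pq)$ on $\mathbb{R}[\mathbf{x}]_d$, and $\mathrm{Ann}_{d}(\sigma)=\{p\in \mathbb{R}[\mathbf{x}]_{d} \mid \sigma(pq)=0 \text{ for all } q\in\mathbb{R}[\mathbf{x}]_d\} = \{p \in \mathbb{R}[\mathbf{x}]_{d}\mid \sigma(p^{2})=0\}$. For a list $\mathbf{p}=[p_1,\dots,p_l]$ of polynomials with $\langle p_i,p_i\rangle_\sigma>0$ and $\langle p_i,p_j\rangle_\sigma=0$ for $i\ne j$, set $\mathrm{proj}(f,\mathbf{p}) = f - \sum_{i=1}^{l} \frac{\langle f,p_i\rangle_\sigma}{\langle p_i,p_i\rangle_\sigma} p_i$. The algorithm: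 fix a monomial ordering $\prec$ compatible with degree. Start with empty lists $\mathbf{b},\mathbf{p},\mathbf{k},\mathbf{l}$ and current monomial set $\mathbf{n}=[1]$. While $\mathbf{n}$ is nonempty, for each $\mathbf{x}^\alpha\in\mathbf{n}$ compute $p_\alpha := \mathrm{proj}(\mathbf{x}^\alpha,\mathbf{p})$ and $v_\alpha=\langle p_\alpha,p_\alpha\rangle_\sigma$; if $v_\alpha\neq 0$, add $\mathbf{x}^\alpha$ to $\mathbf{b}$ and $p_\alpha$ to $\mathbf{p}$, otherwise add $k_\alpha:=p_\alpha$ to $\mathbf{k}$ and $\mathbf{x}^\alpha$ to $\mathbf{l}$. Then let $\mathbf{n}$ be the monomials of degree $\le d$ of lowest degree, ordered by $\prec$, not in $\mathbf{b}$ and not divisible by a monomial of $\mathbf{l}$. The output is $\mathbf{k}=[k_\gamma]_{\mathbf{x}^\gamma\in\mathbf{l}}$ (with leading monomials $\mathbf{l}$), orthogonal polynomials $\mathbf{p}=[p_\beta]$, and monomials $\mathbf{b}$. Notation: for $\alpha\in\mathbb{N}^n$, $(\mathbf{k})_{\preceq\alpha}$ is the vector space spanned by the polynomials $\mathbf{x}^\delta k_\gamma$ with $\delta+\gamma\preceq\alpha$; $\mathbf{p}_{\preceq\alpha}$ is the set of $p_\beta\in\mathbf{p}$ with $\beta\preceq\alpha$. *)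

From HB Require Import structures.
From mathcomp Require Import all_boot all_order all_algebra.
From mathcomp Require Export mpoly.
Set Implicit Arguments. Unset Strict Implicit. Unset Printing Implicit Defensive.
Import Order.TTheory GRing.Theory Num.Theory.
Local Open Scope ring_scope.

Section Orth.
Variables (R : realFieldType) (n : nat).
Local Notation mon := 'X_{1..n}.
Local Notation P := {mpoly R[n]}.

Definition monomial_order (mle : rel mon) : Prop :=
  reflexive mle /\ antisymmetric mle /\ transitive mle /\ total mle /\
  (forall a b c : mon, mle a b -> mle (a + c)%MM (b + c)%MM) /\
  (forall a : mon, mle 0%MM a).

Definition degree_compatible (mle : rel mon) : Prop :=
  forall a b : mon, (mdeg a < mdeg b)%N -> mle a b && (a != b).

Variable sigma : P -> R.

Definition bform (p q : P) : R := sigma (p * q).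

Definition proj (f : P) (ps : seq P) : P :=
  f - \sum_(q <- ps) (bform f q / bform q q) *: q.

Definition in_Ann (d : nat) (f : P) : Prop :=
  (msize f <= d.+1)%N /\ forall q : P, (msize q <= d.+1)%N -> sigma (f * q) = 0.

Variable mle : rel mon.
Variable d : nat.

(* State of the algorithm: (b, p, k) where p is the list of pairs (beta, p_beta)
   and k the list of pairs (gamma, k_gamma); the list l is [seq t.1 | t <- k]. *)
Definition alg_state := (seq mon * seq (mon * P) * seq (mon * P))%type.

Definition alg_step1 (st : alg_state) (a : mon) : alg_state :=
  let: (bs, ps, ks) := st in
  let pa := proj 'X_[a] [seq t.2 | t <- ps] in
  if bform pa pa != 0 then (rcons bs a, rcons ps (a, pa), ks)
  else (bs, ps, rcons ks (a, pa)).

Definition mons_le_d : seq mon := [seq val m | m : 'X_{1..n < d.+1}].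

Definition next_mons (st : alg_state) : seq mon :=
  let: (bs, ps, ks) := st in
  let cand := [seq m <- mons_le_d | (m \notin bs) &&
                  ~~ has (fun g => (g <= m)%MM) [seq t.1 | t <- ks]] in
  sort mle [seq m <- cand | all (fun m' => (mdeg m <= mdeg m')%N) cand].

Fixpoint alg_loop (fuel : nat) (st : alg_state) (ns : seq mon) : alg_state :=
  match fuel with
  | 0 => st
  | fuel'.+1 =>
      if ns is [::] then st
      else let st' := foldl alg_step1 st ns in alg_loop fuel' st' (next_mons st')
  end.

(* Each pass of the loop handles at least one new monomial of degree <= d,
   so #|'X_{1..n < d.+1}|.+1 passes suffice for termination. *)
Definition orth_alg : alg_state :=
  alg_loop (#|{: 'X_{1..n < d.+1}}|).+1 ([::], [::], [::]) [:: 0%MM].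

(* (k)_{⪯ alpha}: the span of x^delta k_gamma with delta + gamma ⪯ alpha *)
Definition in_kspan (ks : seq (mon * P)) (a : mon) (f : P) : Prop :=
  exists s : seq (R * mon * (mon * P)),
    all (fun t => (t.2 \in ks) && mle (t.1.2 + t.2.1)%MM a) s /\
    f = \sum_(t <- s) t.1.1 *: ('X_[t.1.2] * t.2.2).

End Orth.

From HB Require Import structures.
From mathcomp Require Import all_boot all_order all_algebra.
From mathcomp Require Import mpoly.
From mathcomp Require Import ring.
Set Implicit Arguments. Unset Strict Implicit. Unset Printing Implicit Defensive.
Import Order.TTheory GRing.Theory Num.Theory.
Local Open Scope ring_scope.

(* Since [sigma] is positive it satisfies Cauchy-Schwarz, so an isotropic
   polynomial [k] ([sigma (k^2) = 0]) of degree at most [d + 1] is orthogonal to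
   every polynomial of degree at most [d + 1]; multiplying by one variable at a
   time, the same holds for [x^delta k] as long as its degree stays at most [d].
   Hence [(k)_{<= alpha}] lies in [Ann_d(sigma)].
   The algorithm keeps [x^beta] (beta in b) and [x^gamma] (gamma in l) equal to
   [p_beta], resp. [k_gamma], up to strictly smaller terms, and when it stops
   every monomial of degree at most [d] is in b or divisible by a monomial of l.
   Induction along the order then gives
   [x^alpha = sum_(beta <= alpha) c_beta p_beta + K] with [K] in [(k)_{<= alpha}].
   As the [p_beta] are pairwise orthogonal and [K] is in [Ann_d(sigma)], the
   [c_beta] are the projection coefficients of [x^alpha], so
   [proj(x^alpha, p_{<= alpha}) = K]. *)

Lemma count_lt_subpred (T : eqType) (a1 a2 : pred T) (s : seq T) x :
  subpred a1 a2 -> x \in s -> a2 x -> ~~ a1 x -> (count a1 s < count a2 s)%N.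
Proof.
move=> sub; elim: s => //= y s IH; rewrite in_cons => /orP[/eqP <-|xs] a2x a1x.
  by rewrite a2x (negbTE a1x) add0n add1n ltnS sub_count.
rewrite -addnS; apply: leq_add (IH xs a2x a1x).
by case: (a1 y) (sub y) => // ->.
Qed.

Lemma has_minimal (T : eqType) (f : T -> nat) (s : seq T) :
  s != [::] -> has (fun x => all (fun y => f x <= f y)%N s) s.
Proof.
move=> s_neq0; have ex : exists k, has (fun x => f x == k) s.
  by case: s s_neq0 => // x s _; exists (f x); rewrite /= eqxx.
case: (ex_minnP ex) => k /hasP[x xs /eqP fx] kmin.
apply/hasP; exists x => //; apply/allP => y ys; rewrite fx; apply: kmin.
by apply/hasP; exists y.
Qed.

Section Monomials.
Variable n : nat.
Local Notation mon := 'X_{1..n}.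

Lemma mnm_ind (Q : mon -> Prop) :
  Q 0%MM -> (forall m i, Q m -> Q (m + U_(i))%MM) -> forall m, Q m.
Proof.
move=> Q0 QS m; move Ek: (mdeg m) => k; elim: k m Ek => [|k IH] m Ek.
  by move/eqP: Ek; rewrite mdeg_eq0 => /eqP ->.
case: (pickP (fun i => 0 < m i)%N) => [i mi | m0].
  have Ui : (U_(i) <= m)%MM.
    by apply/mnm_lepP => j; rewrite mnm1E; case: eqP => [<-|].
  rewrite -(submK Ui); apply/QS/IH.
  by move: Ek; rewrite -{1}(submK Ui) mdegD mdeg1 addn1 => -[].
suff m_eq0 : m = 0%MM by move: Ek; rewrite m_eq0 mdeg0.
by apply/mnmP => j; rewrite mnm0E; apply/eqP; rewrite -leqn0 leqNgt m0.
Qed.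

Lemma mem_mons_le_d d (m : mon) : (m \in mons_le_d n d) = (mdeg m <= d)%N.
Proof.
apply/mapP/idP => [[x _ ->]|md]; first by have := bmdeg x; rewrite ltnS.
by exists (BMultinom (md : (mdeg m < d.+1)%N)); rewrite ?mem_enum.
Qed.

Lemma uniq_mons_le_d d : uniq (mons_le_d n d).
Proof. by rewrite map_inj_uniq ?enum_uniq //; exact: val_inj. Qed.

End Monomials.

Section Support.
Variables (n : nat) (R : nzRingType).
Local Notation mon := 'X_{1..n}.
Local Notation P := {mpoly R[n]}.

Lemma msize_leq (f : P) k :
  (forall m, f@_m != 0 -> (mdeg m < k)%N) -> (msize f <= k)%N.
Proof.
move=> H; rewrite msizeE; apply/bigmax_leqP_seq => m mf _; apply: H.
by rewrite -mcoeff_msupp.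
Qed.

Lemma msuppXM (m m' : mon) (p : P) :
  m' \in msupp ('X_[m] * p) -> exists2 m'', m'' \in msupp p & m' = (m + m'')%MM.
Proof.
move=> /msuppM_le /allpairsP[[m1 m2] /= [m1X m2p ->]]; exists m2 => //.
by move: m1X; rewrite msuppX mem_seq1 => /eqP ->.
Qed.

Lemma msizeXM (m : mon) (p : P) : (msize ('X_[m] * p) <= mdeg m + msize p)%N.
Proof.
apply: msize_leq => m'; rewrite -mcoeff_msupp => /msuppXM[m'' m''p ->].
by rewrite mdegD ltn_add2l; apply: msize_mdeg_lt.
Qed.

End Support.

Section LinearFunctional.
Variables (n : nat) (R : nzRingType) (sigma : {mpoly R[n]} -> R).
Local Notation P := {mpoly R[n]}.
Hypothesis sigma_lin :
  forall (c : R) (p q : P), sigma (c *: p + q) = c * sigma p + sigma q.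

Lemma sigma0 : sigma 0 = 0.
Proof.
have := sigma_lin 1 0 0; rewrite scaler0 addr0 mul1r -{1}[sigma 0]addr0.
by move/addrI/esym.
Qed.

Lemma sigmaD p q : sigma (p + q) = sigma p + sigma q.
Proof. by rewrite -{1}(scale1r p) sigma_lin mul1r. Qed.

Lemma sigmaZ c p : sigma (c *: p) = c * sigma p.
Proof. by rewrite -[c *: p]addr0 sigma_lin sigma0 addr0. Qed.

Lemma sigmaB p q : sigma (p - q) = sigma p - sigma q.
Proof. by rewrite sigmaD -scaleN1r sigmaZ mulN1r. Qed.

Lemma sigma_sum (I : Type) (r : seq I) (Q : pred I) (F : I -> P) :
  sigma (\sum_(i <- r | Q i) F i) = \sum_(i <- r | Q i) sigma (F i).
Proof. exact: (big_morph sigma sigmaD sigma0). Qed.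

End LinearFunctional.

Section Orthogonalization.
Variables (n d : nat) (mle : rel 'X_{1..n}).
Local Notation mon := 'X_{1..n}.
Local Notation mlt x y := (mle x y && (x != y)).
Hypothesis mle_order : monomial_order mle.

Lemma mle_refl : reflexive mle. Proof. by case: mle_order. Qed.
Lemma mle_anti : antisymmetric mle. Proof. by case: mle_order => _ []. Qed.
Lemma mle_trans : transitive mle.
Proof. by case: mle_order => _ [] _ []. Qed.
Lemma mle_total : total mle. Proof. by case: mle_order => _ [] _ [] _ []. Qed.
Lemma mle_addr a b c : mle a b -> mle (a + c)%MM (b + c)%MM.
Proof. by case: mle_order => _ [] _ [] _ [] _ [] H _; apply: H. Qed.

Lemma mle_lt_trans x y z : mle x y -> mlt y z -> mlt x z.
Proof.
move=> xy /andP[yz y_neq_z]; rewrite (mle_trans xy yz) /=.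
apply: contraNneq y_neq_z => xz; rewrite -xz in yz *.
by apply/eqP/mle_anti; rewrite yz.
Qed.

Hypothesis mle_deg : degree_compatible mle.

Lemma mle_mdeg x y : mle x y -> (mdeg x <= mdeg y)%N.
Proof.
move=> xy; rewrite leqNgt; apply/negP => /mle_deg /andP[yx].
by rewrite (@mle_anti x y) ?xy ?yx ?eqxx.
Qed.

Definition mrank (mu : mon) : nat := count (fun nu => mlt nu mu) (mons_le_d n d).

Lemma mrank_lt nu mu : (mdeg nu <= d)%N -> mlt nu mu -> (mrank nu < mrank mu)%N.
Proof.
move=> nud nu_mu; apply: (count_lt_subpred (x := nu)).
- by move=> x /andP[x_nu _]; apply: mle_lt_trans nu_mu.
- by rewrite mem_mons_le_d.
- exact: nu_mu.
- by rewrite eqxx andbF.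
Qed.

Variables (R : realFieldType) (sigma : {mpoly R[n]} -> R).
Local Notation P := {mpoly R[n]}.
Hypothesis sigma_lin :
  forall (c : R) (p q : P), sigma (c *: p + q) = c * sigma p + sigma q.
Hypothesis sigma_pos : forall p : P, (msize p <= d.+2)%N -> 0 <= sigma (p * p).

Lemma isotropic_mul_eq0 (q h : P) : (msize q <= d.+2)%N -> (msize h <= d.+2)%N ->
  sigma (q * q) = 0 -> sigma (q * h) = 0.
Proof.
move=> szq szh qq0; apply/eqP; apply: contraT => s_neq0.
set s := sigma (q * h) in s_neq0.
(* [sigma ((t q + h)^2) = 2 t s + sigma (h^2)] is affine in [t]; this [t] makes it [-1]. *)
set t := - (sigma (h * h) + 1) / (2 * s).
have sz : (msize (t *: q + h) <= d.+2)%N.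
  by rewrite (leq_trans (msizeD_le _ _)) // geq_max szh (leq_trans (msizeZ_le _ _)).
have := sigma_pos sz.
have -> : (t *: q + h) * (t *: q + h)
    = (t * t) *: (q * q) + (t *: (q * h) + (t *: (q * h) + h * h)).
  rewrite mulrDl !mulrDr -!scalerAl -!scalerAr scalerA [h * q]mulrC.
  by rewrite !addrA.
rewrite !(sigmaD sigma_lin) !(sigmaZ sigma_lin) qq0 mulr0 add0r -/s.
have -> : t * s + (t * s + sigma (h * h)) = -1 by rewrite /t; field; exact: s_neq0.
by rewrite ler0N1.
Qed.

Lemma isotropic_shift (k : P) g : sigma (k * k) = 0 -> (msize k <= g.+1)%N ->
  forall mu : mon, (mdeg mu + g <= d)%N ->
  forall h : P, (msize h <= d.+2)%N -> sigma ('X_[mu] * k * h) = 0.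
Proof.
move=> kk0 szk; elim/mnm_ind => [|mu i IH] hd h szh.
  rewrite mpolyX0 mul1r; apply: isotropic_mul_eq0 => //.
  by rewrite mdeg0 add0n in hd; rewrite (leq_trans szk) // ltnS leqW.
set q := 'X_[mu + U_(i)] * k.
have szq : (msize q <= d.+1)%N.
  by rewrite (leq_trans (msizeXM _ _)) // (leq_trans (leq_add (leqnn _) szk)) // addnS.
apply: isotropic_mul_eq0 => //; first exact: leqW.
have -> : q * q = 'X_[mu] * k * ('X_[U_(i)] * q) by rewrite /q mpolyXD; ring.
apply: IH; first by apply: leq_trans hd; rewrite mdegD leq_add2r leq_addr.
by rewrite (leq_trans (msizeXM _ _)) // mdeg1.
Qed.

Lemma in_Ann0 : in_Ann sigma d 0.
Proof. by split=> [|q _]; rewrite ?msize0 // mul0r (sigma0 sigma_lin). Qed.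

Lemma in_AnnD f g : in_Ann sigma d f -> in_Ann sigma d g -> in_Ann sigma d (f + g).
Proof.
move=> [szf f0] [szg g0]; split=> [|q szq].
  by rewrite (leq_trans (msizeD_le _ _)) // geq_max szf szg.
by rewrite mulrDl (sigmaD sigma_lin) f0 ?g0 ?addr0.
Qed.

Lemma in_AnnZ c f : in_Ann sigma d f -> in_Ann sigma d (c *: f).
Proof.
move=> [szf f0]; split=> [|q szq]; first exact: leq_trans (msizeZ_le _ _) szf.
by rewrite -scalerAl (sigmaZ sigma_lin) f0 ?mulr0.
Qed.

Lemma isotropic_shift_Ann (k : P) g (mu : mon) : sigma (k * k) = 0 ->
  (msize k <= g.+1)%N -> (mdeg mu + g <= d)%N -> in_Ann sigma d ('X_[mu] * k).
Proof.
move=> kk0 szk hd; split=> [|q szq]; last by have := isotropic_shift kk0 szk hd (leqW szq).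
by rewrite (leq_trans (msizeXM _ _)) // (leq_trans (leq_add (leqnn _) szk)) // addnS.
Qed.

Lemma kspan0 (ks : seq (mon * P)) a : in_kspan mle ks a 0.
Proof. by exists [::]; rewrite big_nil. Qed.

Lemma kspanD (ks : seq (mon * P)) a f g :
  in_kspan mle ks a f -> in_kspan mle ks a g -> in_kspan mle ks a (f + g).
Proof.
move=> [s1 [s1ks ->]] [s2 [s2ks ->]]; exists (s1 ++ s2).
by rewrite all_cat s1ks s2ks big_cat.
Qed.

Lemma kspanZ (ks : seq (mon * P)) a c f : in_kspan mle ks a f -> in_kspan mle ks a (c *: f).
Proof.
move=> [s [sks ->]]; exists [seq (c * t.1.1, t.1.2, t.2) | t <- s]; split.
  by rewrite all_map; apply: sub_all sks => t.
by rewrite big_map scaler_sumr; apply: eq_bigr => t _; rewrite scalerA.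
Qed.

Lemma kspan_mono (ks : seq (mon * P)) a b f : mle a b -> in_kspan mle ks a f -> in_kspan mle ks b f.
Proof.
move=> ab [s [sks ->]]; exists s; split => //.
by apply: sub_all sks => t /andP[-> /= /mle_trans]; apply.
Qed.

Lemma kspanXM (ks : seq (mon * P)) a delta t :
  t \in ks -> mle (delta + t.1)%MM a -> in_kspan mle ks a ('X_[delta] * t.2).
Proof.
by move=> tks le_a; exists [:: (1, delta, t)]; rewrite /= tks le_a big_seq1 scale1r.
Qed.

Lemma kspan_Ann (ks : seq (mon * P)) a :
  (forall t, t \in ks -> sigma (t.2 * t.2) = 0 /\ (msize t.2 <= (mdeg t.1).+1)%N) ->
  (mdeg a <= d)%N -> forall f, in_kspan mle ks a f -> in_Ann sigma d f.
Proof.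
move=> ks_iso ha f [s [/allP sks ->]]; rewrite big_seq.
apply: (big_ind (in_Ann sigma d)); [exact: in_Ann0 | exact: in_AnnD |].
move=> [[c delta] t] /sks /andP[/= tks le_a]; apply: in_AnnZ.
have [kk0 szk] := ks_iso t tks.
by apply: isotropic_shift_Ann kk0 szk _; rewrite -mdegD (leq_trans (mle_mdeg le_a)).
Qed.


Definition supp_below (a : mon) (f : P) : Prop := forall m, f@_m != 0 -> mlt m a.

Lemma mle_supp_lead a (p : P) m : supp_below a ('X_[a] - p) -> p@_m != 0 -> mle m a.
Proof.
move=> lead pm; have [<- | a_neq_m] := eqVneq a m; first exact: mle_refl.
have /lead /andP[] // : ('X_[a] - p)@_m != 0.
by rewrite mcoeffB mcoeffX (negbTE a_neq_m) sub0r oppr_eq0.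
Qed.

Lemma msize_lead a (p : P) : supp_below a ('X_[a] - p) -> (msize p <= (mdeg a).+1)%N.
Proof.
move=> lead; apply: msize_leq => m pm; rewrite ltnS.
exact/mle_mdeg/(mle_supp_lead lead pm).
Qed.

Lemma supp_below_sum (ps : seq (mon * P)) (c : mon * P -> R) a :
  (forall t, t \in ps -> mlt t.1 a /\ supp_below t.1 ('X_[t.1] - t.2)) ->
  supp_below a (\sum_(t <- ps) c t *: t.2).
Proof.
move=> ps_below m; rewrite raddf_sum /=; apply: contraR => m_not_below.
rewrite big_seq big1 // => t tps; rewrite mcoeffZ.
have [t_lt_a t_lead] := ps_below t tps.
have [-> | tm] := eqVneq t.2@_m 0; first by rewrite mulr0.
by rewrite (mle_lt_trans (mle_supp_lead t_lead tm) t_lt_a) in m_not_below.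
Qed.

Lemma supp_belowXM delta a (f : P) :
  supp_below a f -> supp_below (delta + a)%MM ('X_[delta] * f).
Proof.
move=> f_below m; rewrite -mcoeff_msupp => /msuppXM[m' m'f ->].
rewrite mcoeff_msupp in m'f; have /andP[m'a m'_neq_a] := f_below _ m'f.
rewrite ![(delta + _)%MM]addmC mle_addr //=.
by apply: contra m'_neq_a => /eqP/addIm ->.
Qed.

Record orth_inv (ps ks : seq (mon * P)) : Prop := OrthInv {
  orth_uniq : uniq ps;
  orth_nz : forall t, t \in ps -> bform sigma t.2 t.2 != 0;
  orth_pair : forall t t', t \in ps -> t' \in ps -> t != t' -> bform sigma t.2 t'.2 = 0;
  orth_iso : forall t, t \in ks -> bform sigma t.2 t.2 = 0;
  orth_lead : forall t, t \in ps ++ ks -> supp_below t.1 ('X_[t.1] - t.2);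
  orth_deg : forall t, t \in ps ++ ks -> (mdeg t.1 <= d)%N }.

Section OrthFamily.
Variables ps ks : seq (mon * P).
Hypothesis ps_ks_inv : orth_inv ps ks.

Lemma bform_orth_sum (c : mon * P -> R) t : t \in ps ->
  bform sigma (\sum_(u <- ps) c u *: u.2) t.2 = c t * bform sigma t.2 t.2.
Proof.
move=> tps; rewrite /bform mulr_suml (sigma_sum sigma_lin).
rewrite (bigD1_seq t) ?(orth_uniq ps_ks_inv) //= -scalerAl (sigmaZ sigma_lin).
rewrite big_seq_cond big1 ?addr0 // => u /andP[ups u_neq_t].
have := orth_pair ps_ks_inv ups tps u_neq_t.
by rewrite -scalerAl (sigmaZ sigma_lin) /bform => ->; rewrite mulr0.
Qed.

Lemma orth_isotropic t : t \in ks ->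
  sigma (t.2 * t.2) = 0 /\ (msize t.2 <= (mdeg t.1).+1)%N.
Proof.
move=> tks; have tpk : t \in ps ++ ks by rewrite mem_cat tks orbT.
split; [exact: (orth_iso ps_ks_inv tks) | exact/msize_lead/(orth_lead ps_ks_inv)].
Qed.

Hypothesis ps_ks_cover : forall mu : mon, (mdeg mu <= d)%N ->
  (mu \in [seq t.1 | t <- ps]) || has (fun g => (g <= mu)%MM) [seq t.1 | t <- ks].

Definition in_pkspan (mu : mon) (f : P) : Prop :=
  exists (c : mon * P -> R) (K : P), [/\ forall t, ~~ mle t.1 mu -> c t = 0,
    in_kspan mle ks mu K & f = \sum_(t <- ps) c t *: t.2 + K].

Lemma pkspan_kspan mu K : in_kspan mle ks mu K -> in_pkspan mu K.
Proof.
move=> Kk; exists (fun _ => 0), K; split=> //.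
by rewrite big1 ?add0r // => t _; rewrite scale0r.
Qed.

Lemma pkspan0 mu : in_pkspan mu 0.
Proof. exact/pkspan_kspan/kspan0. Qed.

Lemma pkspanD mu f g : in_pkspan mu f -> in_pkspan mu g -> in_pkspan mu (f + g).
Proof.
move=> [c1 [K1 [c1_0 K1k ->]]] [c2 [K2 [c2_0 K2k ->]]].
exists (fun t => c1 t + c2 t), (K1 + K2); split.
- by move=> t t_not_le; rewrite c1_0 // c2_0 // addr0.
- exact: kspanD.
rewrite addrACA -big_split /=; congr (_ + _).
by apply: eq_bigr => t _; rewrite scalerDl.
Qed.

Lemma pkspanZ mu c f : in_pkspan mu f -> in_pkspan mu (c *: f).
Proof.
move=> [c1 [K1 [c1_0 K1k ->]]]; exists (fun t => c * c1 t), (c *: K1); split.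
- by move=> t t_not_le; rewrite c1_0 // mulr0.
- exact: kspanZ.
rewrite scalerDr scaler_sumr; congr (_ + _).
by apply: eq_bigr => t _; rewrite scalerA.
Qed.

Lemma pkspan_mono mu nu f : mle mu nu -> in_pkspan mu f -> in_pkspan nu f.
Proof.
move=> mu_nu [c [K [c0 Kk ->]]]; exists c, K; split=> //; last exact: kspan_mono Kk.
by move=> t t_not_le; apply: c0; apply: contra t_not_le => /mle_trans; apply.
Qed.

Lemma pkspan_orth t : t \in ps -> in_pkspan t.1 t.2.
Proof.
move=> tps; exists (fun u => (u == t)%:R), 0; split.
- by move=> u; case: eqP => // ->; rewrite mle_refl.
- exact: kspan0.
rewrite addr0 (bigD1_seq t) ?(orth_uniq ps_ks_inv) //= eqxx scale1r big1 ?addr0 //.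
by move=> u /negbTE ->; rewrite scale0r.
Qed.

Lemma pkspan_supp_below mu f : (forall nu, mlt nu mu -> in_pkspan nu 'X_[nu]) ->
  supp_below mu f -> in_pkspan mu f.
Proof.
move=> below_mu f_below; rewrite (mpolyE f) big_seq.
apply: (big_ind (in_pkspan mu)); [exact: pkspan0 | exact: pkspanD |].
move=> m; rewrite mcoeff_msupp => fm; apply: pkspanZ.
have m_mu := f_below _ fm; apply: pkspan_mono (below_mu _ m_mu).
by case/andP: m_mu.
Qed.

(* [x^mu] is [p_mu] or [x^delta k_gamma] up to strictly smaller terms ([orth_lead]);
   these are handled by induction on [mrank mu]. *)
Lemma pkspanX mu : (mdeg mu <= d)%N -> in_pkspan mu 'X_[mu].
Proof.
have [N] := ubnP (mrank mu); elim: N mu => [|N IH] mu; first by rewrite ltn0.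
move=> /ltnSE rank_mu mud.
have below_mu nu : mlt nu mu -> in_pkspan nu 'X_[nu].
  move=> nu_mu; have nud : (mdeg nu <= d)%N.
    by apply: leq_trans mud; apply: mle_mdeg; case/andP: nu_mu.
  by apply: (IH nu _ nud); apply: leq_trans rank_mu; apply: mrank_lt.
have lead := orth_lead ps_ks_inv.
case/orP: (ps_ks_cover mud) => [/mapP[t tps emu] | /hasP[g /mapP[t tks ->] t_mu]].
  subst mu; rewrite -(subrK t.2 'X_[t.1]) addrC; apply: pkspanD.
    exact: pkspan_orth.
  by apply: pkspan_supp_below below_mu _; apply: lead; rewrite mem_cat tps.
set delta := (mu - t.1)%MM; have emu : mu = (delta + t.1)%MM by rewrite submK.
have -> : 'X_[mu] = 'X_[delta] * t.2 + 'X_[delta] * ('X_[t.1] - t.2).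
  by rewrite -mulrDr addrC subrK -mpolyXD -emu.
apply: pkspanD.
  by apply/pkspan_kspan/kspanXM; rewrite -?emu ?mle_refl.
apply: pkspan_supp_below below_mu _; rewrite emu; apply: supp_belowXM.
by apply: lead; rewrite mem_cat tks orbT.
Qed.

Lemma proj_in_kspan a : (mdeg a <= d)%N ->
  in_kspan mle ks a (proj sigma 'X_[a] [seq t.2 | t <- ps & mle t.1 a]).
Proof.
move=> ad; have [c [K [c0 Kk eX]]] := pkspanX ad.
have [_ K_Ann] := kspan_Ann orth_isotropic ad Kk.
have coef t : t \in ps -> bform sigma 'X_[a] t.2 / bform sigma t.2 t.2 = c t.
  move=> tps; have tpk : t \in ps ++ ks by rewrite mem_cat tps.
  have szt : (msize t.2 <= d.+1)%N.
    by rewrite (leq_trans (msize_lead (orth_lead ps_ks_inv tpk))) // ltnS (orth_deg ps_ks_inv tpk).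
  have := bform_orth_sum c tps; rewrite {1}eX /bform mulrDl (sigmaD sigma_lin).
  rewrite K_Ann // addr0 => ->; rewrite mulfK //; exact: (orth_nz ps_ks_inv tps).
rewrite /proj big_map big_filter big_mkcond /=.
rewrite (eq_big_seq (fun t => c t *: t.2)) => [|t tps]; last first.
  by case: ifP => [_ | t_not_le]; rewrite ?coef // c0 ?t_not_le ?scale0r.
by rewrite {1}eX [_ + K]addrC addrK.
Qed.

End OrthFamily.

Definition b_mons (st : alg_state R n) : seq mon := st.1.1.
Definition l_mons (st : alg_state R n) : seq mon := [seq t.1 | t <- st.2].
Definition processed (st : alg_state R n) : seq mon := b_mons st ++ l_mons st.

Definition state_inv (st : alg_state R n) : Prop :=
  let: (bs, ps, ks) := st in bs = [seq t.1 | t <- ps] /\ orth_inv ps ks.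

Lemma alg_step1_grow st a : let st' := alg_step1 sigma st a in
  [/\ processed st' =i a :: processed st,
      {subset b_mons st <= b_mons st'} & {subset l_mons st <= l_mons st'}].
Proof.
case: st => [[bs ps] ks] /=; case: ifP => _; split=> m;
  rewrite /processed /b_mons /l_mons /= ?map_rcons ?mem_cat ?mem_rcons ?in_cons ?mem_cat;
  by case: (m == a); case: (m \in bs); case: (m \in [seq t.1 | t <- ks]).
Qed.

Lemma alg_step1_inv st a : state_inv st -> (mdeg a <= d)%N ->
  (forall m, m \in processed st -> mlt m a) -> state_inv (alg_step1 sigma st a).
Proof.
case: st => [[bs ps] ks] [-> inv] ad a_above.
have ps_lt_a t : t \in ps -> mlt t.1 a.
  by move=> tps; apply: a_above; rewrite mem_cat map_f.
rewrite /alg_step1 /=.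
set c := fun u : mon * P => bform sigma 'X_[a] u.2 / bform sigma u.2 u.2.
have -> : proj sigma 'X_[a] [seq t.2 | t <- ps] = 'X_[a] - \sum_(u <- ps) c u *: u.2.
  by rewrite /proj big_map.
set pa := 'X_[a] - _.
have pa_orth t : t \in ps -> bform sigma pa t.2 = 0.
  move=> tps; rewrite /bform mulrBl (sigmaB sigma_lin).
  have := bform_orth_sum inv c tps; rewrite /bform => ->.
  by rewrite /c mulfVK ?subrr //; exact: (orth_nz inv tps).
have pa_lead : supp_below a ('X_[a] - pa).
  rewrite /pa subKr; apply: supp_below_sum => t tps; split; first exact: ps_lt_a.
  by apply: (orth_lead inv); rewrite mem_cat tps.
have new_a : (a, pa) \notin ps by apply/negP => /ps_lt_a; rewrite eqxx andbF.
have lead_deg t : (t == (a, pa)) || (t \in ps ++ ks) ->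
    supp_below t.1 ('X_[t.1] - t.2) /\ (mdeg t.1 <= d)%N.
  by case/predU1P=> [-> // | tpk]; split; [exact: (orth_lead inv) | exact: (orth_deg inv)].
case: ifP => pa_nz; split; rewrite ?map_rcons //; apply: OrthInv.
- by rewrite rcons_uniq new_a (orth_uniq inv).
- by move=> t; rewrite mem_rcons in_cons => /predU1P[-> // | /(orth_nz inv)].
- move=> t t'; rewrite !mem_rcons !in_cons => /predU1P[-> | tps] /predU1P[-> | t'ps].
  + by rewrite eqxx.
  + by move=> _; apply: pa_orth.
  + by move=> _; rewrite /bform mulrC; apply: pa_orth.
  + exact: (orth_pair inv).
- exact: (orth_iso inv).
- by move=> t; rewrite mem_cat mem_rcons in_cons -orbA -mem_cat => /lead_deg[].
- by move=> t; rewrite mem_cat mem_rcons in_cons -orbA -mem_cat => /lead_deg[].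
- exact: (orth_uniq inv).
- exact: (orth_nz inv).
- exact: (orth_pair inv).
- move=> t; rewrite mem_rcons in_cons => /predU1P[-> | /(orth_iso inv)] //.
  by apply/eqP; rewrite -(negbK (_ == 0)) pa_nz.
- by move=> t; rewrite mem_cat mem_rcons in_cons orbCA -mem_cat => /lead_deg[].
- by move=> t; rewrite mem_cat mem_rcons in_cons orbCA -mem_cat => /lead_deg[].
Qed.

Lemma foldl_grow st ns : let st' := foldl (alg_step1 sigma) st ns in
  [/\ processed st' =i ns ++ processed st,
      {subset b_mons st <= b_mons st'} & {subset l_mons st <= l_mons st'}].
Proof.
elim: ns st => [|a ns IH] st /=; first by split.
have [e1 b1 l1] := alg_step1_grow st a; have [e2 b2 l2] := IH (alg_step1 sigma st a).
split=> [m | m /b1/b2 | m /l1/l2] //.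
by rewrite e2 (mem_cat m ns) e1 !in_cons (mem_cat m ns) orbCA.
Qed.

Lemma foldl_inv st ns : state_inv st -> all (fun a => mdeg a <= d)%N ns ->
  sorted mle ns -> uniq ns -> (forall m a, m \in processed st -> a \in ns -> mlt m a) ->
  state_inv (foldl (alg_step1 sigma) st ns).
Proof.
elim: ns st => [|a ns IH] st //= inv /andP[ad nsd] a_ns /andP[a_notin ns_uniq] above.
have [e1 _ _] := alg_step1_grow st a.
apply: (IH _ _ nsd (path_sorted a_ns) ns_uniq).
  by apply: alg_step1_inv inv ad _ => m /above; apply; rewrite mem_head.
move=> m b; rewrite e1 in_cons => /predU1P[-> bns | mst bns].
  rewrite (allP (order_path_min mle_trans a_ns)) //=.
  by apply: contraNneq a_notin => ->.
by apply: above; rewrite // in_cons bns orbT.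
Qed.

Definition candidate (st : alg_state R n) (m : mon) : bool :=
  (m \notin b_mons st) && ~~ has (fun g => (g <= m)%MM) (l_mons st).
Definition candidates st : seq mon := [seq m <- mons_le_d n d | candidate st m].

Lemma next_monsE st : next_mons mle d st =
  sort mle [seq m <- candidates st | all (fun m' => mdeg m <= mdeg m')%N (candidates st)].
Proof. by case: st => [[bs ps] ks]. Qed.

Lemma mem_next_mons st x : (x \in next_mons mle d st) =
  (x \in candidates st) && all (fun m' => mdeg x <= mdeg m')%N (candidates st).
Proof. by rewrite next_monsE mem_sort mem_filter andbC. Qed.

Lemma candidate_processed st m : candidate st m -> m \notin processed st.
Proof.
case/andP=> m_notin_b m_not_div; rewrite mem_cat negb_or m_notin_b /=.
by apply: contra m_not_div => m_l; apply/hasP; exists m => //; exact: lepm_refl.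
Qed.

Lemma candidate_foldl st ns m :
  candidate (foldl (alg_step1 sigma) st ns) m -> candidate st m && (m \notin ns).
Proof.
have [e b_sub l_sub] := foldl_grow st ns.
move=> cm; have := candidate_processed cm; rewrite e mem_cat negb_or => /andP[-> _].
case/andP: cm => m_notin_b m_not_div; rewrite andbT; apply/andP; split.
  by apply: contra m_notin_b; apply: b_sub.
by apply: contra m_not_div => /hasP[g /l_sub gl gm]; apply/hasP; exists g.
Qed.

Definition loop_inv (st : alg_state R n) : Prop := state_inv st /\
  forall m m', m \in processed st -> m' \in candidates st -> (mdeg m < mdeg m')%N.

Lemma pass_inv st : loop_inv st ->
  loop_inv (foldl (alg_step1 sigma) st (next_mons mle d st)).
Proof.
move=> [inv deg_sep]; have [e _ _] := foldl_grow st (next_mons mle d st).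
have cand_ns x : x \in next_mons mle d st -> x \in candidates st.
  by rewrite mem_next_mons => /andP[].
split.
  apply: foldl_inv inv _ _ _ _.
  - by apply/allP => x /cand_ns; rewrite mem_filter mem_mons_le_d => /andP[].
  - by rewrite next_monsE; exact: (sort_sorted mle_total).
  - by rewrite next_monsE sort_uniq !filter_uniq ?uniq_mons_le_d.
  - by move=> m x mst /cand_ns xc; apply/mle_deg/deg_sep.
move=> m m'; rewrite e mem_cat mem_filter => m_in /andP[/candidate_foldl/andP[cm' m'_ns] m'd].
have m'c : m' \in candidates st by rewrite mem_filter cm'.
move: m'_ns; rewrite mem_next_mons m'c /= => /allPn[y yc]; rewrite -ltnNge => y_lt.
case/orP: m_in => [m_ns | mst]; last exact: deg_sep.
by move: m_ns; rewrite mem_next_mons => /andP[_ /allP/(_ y yc)] /leq_ltn_trans; apply.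
Qed.

Lemma pass_shrinks st : next_mons mle d st != [::] ->
  (size (candidates (foldl (alg_step1 sigma) st (next_mons mle d st)))
    < size (candidates st))%N.
Proof.
case E: (next_mons mle d st) => [//|x xs] _; rewrite -E.
have : x \in next_mons mle d st by rewrite E mem_head.
rewrite mem_next_mons mem_filter => /andP[/andP[xc xmons] _].
rewrite !size_filter; apply: (count_lt_subpred (x := x)) => //.
- by move=> m /candidate_foldl/andP[].
- by apply/negP => /candidate_foldl; rewrite E mem_head andbF.
Qed.

Lemma next_mons_nil st : next_mons mle d st = [::] -> candidates st = [::].
Proof.
move=> ns0; apply/eqP; apply: contraT => cand_neq0.
have /hasP[x xc xmin] := has_minimal mdeg cand_neq0.
by have := in_nil x; rewrite -ns0 mem_next_mons xc xmin.
Qed.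

Lemma alg_loop_final fuel st : loop_inv st -> (size (candidates st) < fuel)%N ->
  let st' := alg_loop sigma mle d fuel st (next_mons mle d st) in
  state_inv st' /\ candidates st' = [::].
Proof.
elim: fuel st => // fuel IH st st_inv size_lt /=.
case E: (next_mons mle d st) => [|x xs].
  by split; [exact: st_inv.1 | exact: next_mons_nil].
rewrite -E; apply: IH; first exact: pass_inv.
by apply: leq_trans (pass_shrinks _) _; rewrite ?E // -ltnS.
Qed.

Lemma candidates_init : candidates ([::], [::], [::]) = mons_le_d n d.
Proof. by rewrite /candidates (@eq_filter _ _ predT) ?filter_predT. Qed.

Lemma next_mons_init : next_mons mle d (([::], [::], [::]) : alg_state R n) = [:: 0%MM].
Proof.
rewrite next_monsE candidates_init (@eq_in_filter _ _ (pred1 0%MM)).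
  by rewrite filter_pred1_uniq ?uniq_mons_le_d ?mem_mons_le_d ?mdeg0.
move=> m _ /=; apply/allP/eqP => [/(_ 0%MM) | ->].
  by rewrite mem_mons_le_d mdeg0 leqn0 mdeg_eq0 => /(_ isT)/eqP.
by move=> m' _; rewrite mdeg0.
Qed.

Lemma orth_alg_final :
  state_inv (orth_alg sigma mle d) /\ candidates (orth_alg sigma mle d) = [::].
Proof.
rewrite /orth_alg -next_mons_init; apply: alg_loop_final.
  by split=> [|m m']; first split.
by rewrite candidates_init size_map -cardE.
Qed.

Lemma candidates_nil_cover st mu : candidates st = [::] -> (mdeg mu <= d)%N ->
  (mu \in b_mons st) || has (fun g => (g <= mu)%MM) (l_mons st).
Proof.
move=> cand0 mud; have : mu \notin candidates st by rewrite cand0.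
by rewrite mem_filter mem_mons_le_d mud andbT negb_and !negbK.
Qed.

End Orthogonalization.

Theorem proposition4p1 (R : realFieldType) (n d : nat)
  (sigma : {mpoly R[n]} -> R)
  (sigma_lin : forall (c : R) (p q : {mpoly R[n]}),
      sigma (c *: p + q) = c * sigma p + sigma q)
  (sigma_pos : forall p : {mpoly R[n]}, (msize p <= d.+2)%N -> 0 <= sigma (p * p))
  (mle : rel 'X_{1..n})
  (Hord : monomial_order mle) (Hdeg : degree_compatible mle)
  (a : 'X_{1..n}) :
  let: (bs, ps, ks) := orth_alg sigma mle d in
  (mdeg a <= d)%N ->
  has (fun g => (g <= a)%MM) [seq t.1 | t <- ks] ->
  let pa := proj sigma 'X_[a] [seq t.2 | t <- ps & mle t.1 a] in
  in_kspan mle ks a pa /\ (forall f, in_kspan mle ks a f -> in_Ann sigma d f).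
Proof.
have [] := orth_alg_final d Hord Hdeg sigma_lin.
case: (orth_alg sigma mle d) => [[bs ps] ks] [-> inv] no_candidates ad _.
have cover := candidates_nil_cover no_candidates.
split; first exact: (proj_in_kspan Hord Hdeg sigma_lin sigma_pos inv cover ad).
exact: (kspan_Ann Hord Hdeg sigma_lin sigma_pos (orth_isotropic Hord Hdeg inv) ad).
Qed.
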